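(* Let $W\in\mathcal{W}(St^{\chi},\psi)^J$, let $\bar{k}\in\mathbb{Z}^n$, $d=\varpi^{\bar{k}}$ and $w\in\mathbf{W}$. Then $W(dw)=0$ unless $\bar{k}$ is $w$-dominant, i.e. unless for all $\alpha\in\Delta$ we have $\langle\alpha,\bar{k}\rangle\ge 0$ if $w^{-1}\alpha\in\Phi^+$ and $\langle\alpha,\bar{k}\rangle\ge -1$ if $w^{-1}\alpha\in\Phi^-$.
   Context: $F$ is a non-archimedean local field with ring of integers $\mathcal{O}$, maximal ideal $\mathfrak{p}=\varpi\mathcal{O}$. $G=GL_n(F)$, $B$ upper triangular Borel, $N$ upper triangular unipotent matrices, $K=GL_n(\mathcal{O})$, $J$ the Iwahori subgroup (elements of $K$ whose reduction mod $\mathfrak{p}$ is upper triangular). $\varpi^{\bar{k}}=\mathrm{diag}(\varpi^{k_1},\dots,\varpi^{k_n})$. $\mathbf{W}$ is the Weyl group of permutation matrices. Roots $\alpha_{i,j}(\mathrm{diag}(t))=t_i/t_j$, $\Phi^+=\{\alpha_{i,j}:i<j\}$, $\Phi^-=\{\alpha_{i,j}:i>j\}$, $\Delta=\{\alpha_{i,i+1}\}$, $(w\alpha)(t)=\alpha(w^{-1}tw)$, $\langle\alpha_{i,j},\bar{k}\rangle=k_i-k_j$. $\delta_B(\mathrm{diag}(t))=\prod|t_i|^{n+1-2i}$. $\tau$ unramified character of $F^*$ with $\tau^n=1$, $\chi=\tau\circ\det$; $St^{\chi}$ is the unique irreducible quotient of $I(\chi\delta_B^{-1/2})$, $I(\chi)=\mathrm{Ind}_B^G(\delta_B^{1/2}\chi)$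 (normalized induction). $\psi$ is an unramified additive character of $F$ (trivial on $\mathcal{O}$, nontrivial on $\mathfrak{p}^{-1}$), extended to $N$ by $\psi(n)=\psi(\sum_i n_{i,i+1})$; $\mathcal{W}(St^{\chi},\psi)$ is the Whittaker model (functions with $W(ng)=\psi(n)W(g)$, $G$ acting by right translation) and the superscript $J$ denotes right $J$-invariant functions. *)

From HB Require Import structures.
From mathcomp Require Import all_boot all_order all_algebra all_fingroup.
From mathcomp Require Import reals complex.
Set Implicit Arguments. Unset Strict Implicit. Unset Printing Implicit Defensive.
Import Order.TTheory GRing.Theory Num.Theory.
Local Open Scope ring_scope.

Section LocalFieldDefs.
Variables (F : fieldType) (v : F -> int) (pi : F).

(* x ∈ p^m  (x = 0 or v(x) >= m); the value of v at 0 is irrelevant *)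
Definition inP (m : int) (x : F) : bool := (x == 0) || (m <= v x).
Definition inO (x : F) : bool := inP 0 x.

Definition nonarch_local_field (q : nat) : Prop :=
  [/\ (forall x y, x != 0 -> y != 0 -> v (x * y) = v x + v y),
      (forall x y, x != 0 -> y != 0 -> x + y != 0 -> Num.min (v x) (v y) <= v (x + y)),
      pi != 0 /\ v pi = 1,
      (* residue field O/p has exactly q elements, q > 1 *)
      (1 < q)%N /\ exists s : seq F, [/\ size s = q, all inO s,
          (forall i j, (i < q)%N -> (j < q)%N -> inP 1 (nth 0 s i - nth 0 s j) -> i = j)
        & forall x, inO x -> exists2 r, r \in s & inP 1 (x - r)] &
      forall u : nat -> F,
        (forall m : int, exists N, forall i j, (N <= i)%N -> (N <= j)%N -> inP m (u i - u j)) ->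
        exists l, forall m : int, exists N, forall i, (N <= i)%N -> inP m (u i - l)].
End LocalFieldDefs.

Section GroupDefs.
Variables (F : fieldType) (v : F -> int) (n : nat).
Local Notation M := 'M[F]_n.

Definition inGL (g : M) : bool := g \in unitmx.
Definition inB (b : M) : Prop := inGL b /\ forall i j : 'I_n, (j < i)%N -> b i j = 0.
Definition inN (u : M) : Prop :=
  (forall i j : 'I_n, (j < i)%N -> u i j = 0) /\ (forall i : 'I_n, u i i = 1).
Definition inK (k : M) : Prop :=
  (forall i j, inO v (k i j)) /\ \det k != 0 /\ v (\det k) = 0.
Definition inJ (k : M) : Prop := inK k /\ forall i j : 'I_n, (j < i)%N -> inP v 1 (k i j).
Definition inKm (m : nat) (k : M) : Prop := forall i j, inP v m%:Z ((k - 1%:M) i j).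

Definition varpi_diag (pi : F) (k : 'I_n -> int) : M := diag_mx (\row_i pi ^ k i).

(* roots: alpha_{a,b}(diag t) = t_a / t_b, as characters of the diagonal torus *)
Definition root (a b : 'I_n) : M -> F := fun t => t a a / t b b.
Definition torus_elt (t : M) : Prop := is_diag_mx t /\ forall i, t i i != 0.
Definition winv_act (w : M) (alpha : M -> F) : M -> F :=
  fun t => alpha (w *m t *m invmx w).
Definition is_pos_root (beta : M -> F) : Prop :=
  exists a b : 'I_n, (a < b)%N /\ forall t, torus_elt t -> beta t = root a b t.
Definition is_neg_root (beta : M -> F) : Prop :=
  exists a b : 'I_n, (b < a)%N /\ forall t, torus_elt t -> beta t = root a b t.
Definition pairing (k : 'I_n -> int) (a b : 'I_n) : int := k a - k b.

Definition w_dominant (w : M) (k : 'I_n -> int) : Prop :=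
  forall i j : 'I_n, nat_of_ord j = i.+1 ->
    (is_pos_root (winv_act w (root i j)) -> 0 <= pairing k i j) /\
    (is_neg_root (winv_act w (root i j)) -> -1 <= pairing k i j).

Definition inWeyl (w : M) : Prop := exists s : 'S_n, w = perm_mx s.
End GroupDefs.

Section RepDefs.
Variables (F : fieldType) (v : F -> int) (n : nat) (R : realType).
Local Notation M := 'M[F]_n.
Local Notation C := R[i].
Local Notation Fn := (M -> C).

Definition rho (h : M) (f : Fn) : Fn := fun g => f (g *m h).

(* functions on G = GL_n(F): we work with functions on matrices vanishing off GL *)
Definition onG (f : Fn) : Prop := forall g, ~~ inGL g -> f g = 0.
Definition smooth (f : Fn) : Prop :=
  exists m : nat, (0 < m)%N /\ forall g k, inGL g -> inKm v m k -> f (g *m k) = f g.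

Definition subspace (S : Fn -> Prop) : Prop :=
  [/\ S (fun _ => 0), (forall f g, S f -> S g -> S (fun x => f x + g x))
    & forall (c : C) f, S f -> S (fun x => c * f x)].
Definition G_stable (S : Fn -> Prop) : Prop := forall h f, inGL h -> S f -> S (rho h f).
Definition irreducible_rep (S : Fn -> Prop) : Prop :=
  [/\ subspace S, G_stable S, (exists f, S f /\ exists g, f g != 0) &
      forall T : Fn -> Prop, subspace T -> G_stable T -> (forall f, T f -> S f) ->
        (forall f, T f -> forall g, f g = 0) \/ (forall f, S f -> T f)].

Definition absF (q : nat) (x : F) : R := if x == 0 then 0 else (q%:R : R) ^ (- v x).
Definition deltaB (q : nat) (b : M) : R :=
  \prod_(i < n) absF q (b i i) ^ (n%:Z + 1 - 2 * (i%:Z + 1)).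

Definition Ind (q : nat) (sigma : M -> C) : Fn -> Prop := fun f =>
  [/\ onG f, smooth f &
      forall b g, inB b -> inGL g -> f (b *m g) = ((Num.sqrt (deltaB q b))%:C%C * sigma b) * f g].

Definition irreducible_quotient_of (I S : Fn -> Prop) : Prop :=
  irreducible_rep S /\
  exists Phi : Fn -> Fn,
    [/\ (forall f, I f -> S (Phi f)), (forall f', S f' -> exists2 f, I f & Phi f = f'),
        (forall (c : C) f g, I f -> I g -> Phi (fun x => c * f x + g x) = (fun x => c * Phi f x + Phi g x))
      & (forall h f, inGL h -> I f -> Phi (rho h f) = rho h (Phi f))].

Definition psiN (psi : F -> C) (u : M) : C :=
  psi (\sum_(i < n) \sum_(j < n | nat_of_ord j == i.+1) u i j).

Definition whittaker_space (psi : F -> C) (S : Fn -> Prop) : Prop :=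
  forall W, S W -> onG W /\ forall u g, inN u -> inGL g -> W (u *m g) = psiN psi u * W g.
End RepDefs.

From Pilot Require Import Defs.
From mathcomp Require Import all_boot all_order all_algebra all_fingroup.
From mathcomp Require Import reals complex zify.
Import Order.TTheory GRing.Theory Num.Theory.
Set Implicit Arguments. Unset Strict Implicit. Unset Printing Implicit Defensive.
Local Open Scope ring_scope.

(* If g u = m g with u in J and m in N, then
   W g = W (g u) = psi(m) W g, so W g = 0 as soon as psi(m) <> 1.  Take
   g = varpi^k w, some x in p^-1 with psi(x) <> 1, and m = 1 + x E_{i,i+1}; then
   u = g^-1 m g = 1 + x varpi^(k_{i+1} - k_i) E_{w(i),w(i+1)}, which lies in J
   exactly when the dominance inequality at alpha_{i,i+1} fails: k_i < k_{i+1}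
   if w(i) < w(i+1) (w^-1 alpha_{i,i+1} positive), k_i < k_{i+1} - 1 otherwise. *)

Section Transvection.
Variables (F : fieldType) (n : nat).
Implicit Types (a b i j x y : 'I_n) (c : F).

Definition transvection a b c : 'M[F]_n := 1%:M + c *: delta_mx a b.

Lemma transvection_offdiag a b c x y :
  x != y -> transvection a b c x y = if (x == a) && (y == b) then c else 0.
Proof. by move=> /negbTE xy; rewrite !mxE xy add0r; case: ifP; rewrite ?mulr1 ?mulr0. Qed.

Lemma transvection_diag a b c x : a != b -> transvection a b c x x = 1.
Proof.
move=> ab; rewrite !mxE eqxx; case: (x =P a) => [-> | _] /=; last by rewrite mulr0 addr0.
by rewrite (negbTE ab) mulr0 addr0.
Qed.

Lemma trmx_transvection a b c : (transvection a b c)^T = transvection b a c.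
Proof. by rewrite /transvection linearD linearZ /= trmx1 trmx_delta. Qed.

Lemma trig_transvection a b c : (b < a)%N -> is_trig_mx (transvection a b c).
Proof.
move=> ba; apply/is_trig_mxP => x y xy.
rewrite transvection_offdiag ?neq_ltn ?xy //.
case: (x =P a) => [xa | _] //; case: (y =P b) => [yb | _] //.
by move: xy; rewrite xa yb => /(ltn_trans ba); rewrite ltnn.
Qed.

Lemma det_transvection a b c : a != b -> \det (transvection a b c) = 1.
Proof.
have det_lower a' b' : (b' < a')%N -> \det (transvection a' b' c) = 1.
  move=> ba; rewrite det_trig ?trig_transvection //.
  by apply: big1 => x _; rewrite transvection_diag // neq_ltn ba orbT.
rewrite neq_ltn => /orP [ab | ba]; last exact: det_lower.
by rewrite -det_tr trmx_transvection det_lower.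
Qed.

Lemma transvection_inN a b c : (a < b)%N -> inN (transvection a b c).
Proof.
move=> ab; split=> [x y yx | x]; last by rewrite transvection_diag // neq_ltn ab.
by move/is_trig_mxP: (@trig_transvection b a c ab) => /(_ y x yx); rewrite -trmx_transvection mxE.
Qed.

Lemma superdiag_sum_transvection i j c : j = i.+1 :> nat ->
  \sum_(x < n) \sum_(y < n | nat_of_ord y == x.+1) transvection i j c x y = c.
Proof.
move=> ji.
have offdiag x y : nat_of_ord y == x.+1 ->
    transvection i j c x y = if (x == i) && (y == j) then c else 0.
  by move=> /eqP yx; apply: transvection_offdiag; rewrite -(inj_eq val_inj) /= yx neq_ltn ltnSn.
rewrite (bigD1 i) //= [X in _ + X]big1 ?addr0; last first.
  by move=> x /negbTE xi; apply: big1 => y /offdiag ->; rewrite xi.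
rewrite (big_pred1 j) => [|y]; first by rewrite offdiag ?ji // !eqxx.
by rewrite /= -(inj_eq val_inj) /= ji.
Qed.

Lemma psiN_transvection (R : realType) (psi : F -> R[i]) i j c : j = i.+1 :> nat ->
  psiN psi (transvection i j c) = psi c.
Proof. by move=> ji; rewrite /psiN superdiag_sum_transvection. Qed.

Lemma diag_perm_mulmx_transvection (s : 'S_n) (r : 'I_n -> F) i j c c' :
  r i * c' = c * r j ->
  diag_mx (\row_x r x) *m perm_mx s *m transvection (s i) (s j) c' =
  transvection i j c *m (diag_mx (\row_x r x) *m perm_mx s).
Proof.
move=> r_ij; rewrite /transvection mulmxDr mulmx1 mulmxDl mul1mx; congr (_ + _).
rewrite -mulmxA -row_permE mulmxA -[X in _ = _ *m perm_mx X](invgK s) -col_permE.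
apply/matrixP => x y; rewrite mul_diag_mx mul_mx_diag !mxE.
rewrite (inj_eq perm_inj) (canF_eq (permKV s)).
case: (x =P i) => [-> | _]; case: (y =P s j) => [-> | _]; rewrite ?permK ?mulr0 ?mul0r //=.
by rewrite !mulr1 r_ij.
Qed.

End Transvection.

Section Valuation.
Variables (F : fieldType) (v : F -> int).
Hypothesis vM : forall x y : F, x != 0 -> y != 0 -> v (x * y) = v x + v y.

Lemma val1 : v 1 = 0.
Proof. by apply: (@addrI _ (v 1)); rewrite -vM ?oner_neq0 // mulr1 addr0. Qed.

Lemma valV x : x != 0 -> v x^-1 = - v x.
Proof. by move=> x0; apply: (@addrI _ (v x)); rewrite -vM ?invr_neq0 // mulfV // val1 subrr. Qed.

Lemma valXn x m : x != 0 -> v (x ^+ m) = v x *+ m.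
Proof.
move=> x0; elim: m => [|m IHm]; first by rewrite expr0 val1.
by rewrite exprS vM ?expf_neq0 // IHm mulrS.
Qed.

Lemma val_uniformizerXz (pi : F) (m : int) : pi != 0 -> v pi = 1 -> v (pi ^ m) = m.
Proof.
move=> pi0 v_pi; case: m => m; first by rewrite valXn // v_pi natz.
by rewrite NegzE -exprnN valV ?expf_neq0 // valXn // v_pi natz.
Qed.

Lemma inO1 : inO v 1.
Proof. by rewrite /inO /inP val1 lexx orbT. Qed.

Lemma inP0 m : inP v m 0.
Proof. by rewrite /inP eqxx. Qed.

Lemma inJ_transvection n (a b : 'I_n) (c : F) :
  a != b -> inO v c -> ((b < a)%N -> inP v 1 c) -> inJ v (transvection a b c).
Proof.
move=> ab cO cP; split; first split.
- move=> x y; case: (eqVneq x y) => [-> | xy]; first by rewrite transvection_diag ?inO1.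
  by rewrite transvection_offdiag //; case: ifP => // _; apply: inP0.
- by rewrite det_transvection // oner_neq0 val1.
move=> x y yx; rewrite transvection_offdiag; last by rewrite neq_ltn yx orbT.
case: ifP => [/andP [/eqP xa /eqP yb] | _]; last exact: inP0.
by apply: cP; rewrite -xa -yb.
Qed.

End Valuation.

Lemma invmx_perm_mx (F : fieldType) n (s : 'S_n) :
  invmx (perm_mx s) = perm_mx s^-1 :> 'M[F]_n.
Proof.
by rewrite -[RHS]mul1mx -(mulVmx (unitmx_perm _ s)) -mulmxA -perm_mxM mulgV perm_mx1 mulmx1.
Qed.

Lemma winv_act_perm_root (F : fieldType) n (s : 'S_n) (i j : 'I_n) (t : 'M[F]_n) :
  winv_act (perm_mx s) (Defs.root i j) t = Defs.root (s i) (s j) t.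
Proof. by rewrite /winv_act /Defs.root invmx_perm_mx -row_permE -col_permE !mxE. Qed.

Section Roots.
Variables (F : fieldType) (v : F -> int) (pi : F) (n : nat).
Hypothesis vM : forall x y : F, x != 0 -> y != 0 -> v (x * y) = v x + v y.
Hypotheses (pi_neq0 : pi != 0) (v_pi : v pi = 1).

Let t : 'M[F]_n := diag_mx (\row_x pi ^+ x).

Lemma torus_elt_pi_powers : torus_elt t.
Proof.
split=> [|x]; first exact: diag_mx_is_diag.
by rewrite !mxE eqxx mulr1n expf_neq0.
Qed.

Lemma val_root_pi_powers (a b : 'I_n) : v (Defs.root a b t) = a%:Z - b%:Z.
Proof.
rewrite /Defs.root !mxE !eqxx !mulr1n vM ?invr_neq0 ?expf_neq0 //.
by rewrite valV ?expf_neq0 // !valXn // v_pi !natz.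
Qed.

Lemma not_pos_root_perm (s : 'S_n) (i j : 'I_n) :
  (s j < s i)%N -> ~ is_pos_root (winv_act (perm_mx s : 'M[F]_n) (Defs.root i j)).
Proof.
move=> sji [a [b [ab /(_ t torus_elt_pi_powers)]]].
by rewrite winv_act_perm_root => /(congr1 v); rewrite !val_root_pi_powers; lia.
Qed.

Lemma w_dominant_perm_mx (s : 'S_n) (k : 'I_n -> int) :
  (forall i j : 'I_n, j = i.+1 :> nat -> (s i < s j)%N -> 0 <= pairing k i j) ->
  (forall i j : 'I_n, j = i.+1 :> nat -> (s j < s i)%N -> -1 <= pairing k i j) ->
  w_dominant (perm_mx s : 'M[F]_n) k.
Proof.
move=> dom_pos dom_neg i j ji.
case: (ltngtP (s i) (s j)) => [sij | sji | /val_inj/perm_inj ij]; last by move: ji; rewrite ij; lia.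
  by split=> _; [exact: dom_pos | exact: le_trans (dom_pos _ _ ji sij)].
by split=> [/(not_pos_root_perm sji) | _]; last exact: dom_neg.
Qed.

End Roots.

Section WhittakerVanishing.
Variables (F : fieldType) (v : F -> int) (n : nat) (R : realType).
Variables (psi : F -> R[i]) (W : 'M[F]_n -> R[i]).
Hypothesis W_N : forall u g, inN u -> inGL g -> W (u *m g) = psiN psi u * W g.
Hypothesis W_J : forall g j, inGL g -> inJ v j -> W (g *m j) = W g.

Lemma whittaker_eq0_conj g u m :
  inGL g -> inJ v u -> inN m -> g *m u = m *m g -> psiN psi m != 1 -> W g = 0.
Proof.
move=> Gg Ju Nm gu_mg psi_m.
have: (1 - psiN psi m) * W g = 0 by rewrite mulrBl mul1r -W_N // -gu_mg W_J // subrr.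
by move/eqP; rewrite mulf_eq0 subr_eq0 eq_sym (negbTE psi_m) => /eqP.
Qed.

Lemma inGL_varpi_diag_perm (varpi : F) (k : 'I_n -> int) (s : 'S_n) :
  varpi != 0 -> inGL (varpi_diag varpi k *m perm_mx s).
Proof.
move=> varpi0; rewrite /inGL unitmx_mul unitmx_perm andbT unitmxE det_diag unitfE.
by apply/prodf_neq0 => x _; rewrite !mxE expfz_neq0.
Qed.

Lemma whittaker_diag_perm_eq0 (varpi x : F) (k : 'I_n -> int) (s : 'S_n) (i j : 'I_n) :
  j = i.+1 :> nat -> varpi != 0 -> psi x != 1 ->
  inJ v (transvection (s i) (s j) (x * varpi ^ (k j - k i))) ->
  W (varpi_diag varpi k *m perm_mx s) = 0.
Proof.
move=> ji varpi0 psi_x J_u.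
apply: (whittaker_eq0_conj (inGL_varpi_diag_perm k s varpi0) J_u (m := transvection i j x)).
- by apply: transvection_inN; rewrite ji.
- apply: diag_perm_mulmx_transvection.
  by rewrite mulrCA -expfzDr // addrC subrK mulrC.
- by rewrite psiN_transvection.
Qed.

End WhittakerVanishing.

Theorem mainTheorem7
  (F : fieldType) (v : F -> int) (varpi : F) (q : nat)
  (HF : nonarch_local_field v varpi q)
  (n : nat) (R : realType)
  (tau : F -> R[i])
  (Htau_mul : forall x y : F, x != 0 -> y != 0 -> tau (x * y) = tau x * tau y)
  (Htau_ne0 : forall x : F, x != 0 -> tau x != 0)
  (Htau_unram : forall x : F, x != 0 -> v x = 0 -> tau x = 1)
  (Htau_n : forall x : F, x != 0 -> tau x ^+ n = 1)
  (psi : F -> R[i])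
  (Hpsi_add : forall x y : F, psi (x + y) = psi x * psi y)
  (Hpsi_O : forall x : F, inO v x -> psi x = 1)
  (Hpsi_nontriv : exists x : F, inP v (-1) x /\ psi x != 1)
  (* S = W(St^chi, psi): a space of psi-Whittaker functions which, as a
     G-representation, is an irreducible quotient of I(chi delta_B^{-1/2}),
     where chi = tau o det *)
  (S : ('M[F]_n -> R[i]) -> Prop)
  (HSwh : whittaker_space psi S)
  (HSst : irreducible_quotient_of
            (Ind v q (fun b : 'M[F]_n =>
               tau (\det b) * ((Num.sqrt (deltaB v R q b))%:C%C)^-1)) S)
  (W : 'M[F]_n -> R[i]) (HW : S W)
  (HWJ : forall g j : 'M[F]_n, inGL g -> inJ v j -> W (g *m j) = W g)
  (k : 'I_n -> int) (w : 'M[F]_n) (Hw : inWeyl w) :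
  ~ w_dominant w k -> W (varpi_diag varpi k *m w) = 0.
Proof.
case: Hw => s ->{w} not_dom; case: HF => vM _ [varpi_neq0 v_varpi] _ _.
have [x [x_in_pinv psi_x]] := Hpsi_nontriv.
have x_neq0 : x != 0.
  by apply: contraNneq psi_x => ->; apply/eqP/Hpsi_O; rewrite /inO /inP eqxx.
have v_x : -1 <= v x by move: x_in_pinv; rewrite /inP (negbTE x_neq0).
have inP_c (m l : int) : l <= v x + m -> inP v l (x * varpi ^ m).
  by rewrite /inP vM ?expfz_neq0 // (val_uniformizerXz vM) // => ->; rewrite orbT.
have [_ W_N] := HSwh W HW.
apply/eqP/negPn/negP => Wdw_neq0; apply: not_dom.
apply: (w_dominant_perm_mx vM varpi_neq0 v_varpi) => i j ji s_ij.
all: rewrite /pairing leNgt; apply/negP => k_ij; apply/(negP Wdw_neq0)/eqP.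
all: apply: (whittaker_diag_perm_eq0 W_N HWJ ji varpi_neq0 psi_x).
all: apply: (inJ_transvection vM) => [|| s_ji]; first by rewrite neq_ltn s_ij ?orbT.
all: by apply: inP_c; lia.
Qed.
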